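(* Let $R$ be a commutative ring with unity in which every zero divisor is harmless, and let $r\in R$ be a non-zero, non-unit element. Then the following are equivalent: (i) $r$ is irreducible; (ii) $r$ is B-irreducible; (iii) $r$ is F-irreducible.
   Context: A zero divisor $r$ of $R$ is called harmless if there exists a unit $u\in R$ with $r=1-u$. An element $r\in R$ is called irreducible if whenever $r=ab$ with $a,b\in R$, then $a$ is a unit or $b$ is a unit. A non-zero, non-unit element $r\in R$ is called B-irreducible if the principal ideal $(r)$ is a maximal element, with respect to inclusion, of the set of all proper principal ideals of $R$. A factorization of $r$ is an expression $r=a_1\cdots a_n$ with $a_i\in R$; a refinement of this factorization is a factorization obtained by replacing one or more of the factors $a_i$ by a factorization of $a_i$. A non-unit element $r\in R$ is called F-irreducible if every factorization of $r$ has a refinement in which $r$ appears as one of the new factors. *)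

From HB Require Import structures.
From mathcomp Require Import all_boot all_order all_algebra.
Set Implicit Arguments. Unset Strict Implicit. Unset Printing Implicit Defensive.
Import GRing.Theory.
Local Open Scope ring_scope.

Section Defs.
Variable R : comUnitRingType.

Definition zero_divisor (r : R) : Prop := exists s : R, s != 0 /\ r * s = 0.

Definition harmless (r : R) : Prop :=
  zero_divisor r /\ exists u : R, u \is a GRing.unit /\ r = 1 - u.

Definition irreducible_elt (r : R) : Prop :=
  forall a b : R, r = a * b -> a \is a GRing.unit \/ b \is a GRing.unit.

Definition pideal (a : R) : R -> Prop := fun x => exists c : R, x = a * c.

Definition proper_pideal (a : R) : Prop := exists x, ~ pideal a x.

Definition B_irreducible (r : R) : Prop :=
  r != 0 /\ r \isn't a GRing.unit /\
  forall s : R, proper_pideal s ->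
    (forall x, pideal r x -> pideal s x) -> (forall x, pideal s x -> pideal r x).

Definition factorization (x : R) (s : seq R) : Prop :=
  (0 < size s)%N /\ \prod_(a <- s) a = x.

(* r is F-irreducible: every factorization r = a_1 ... a_n has a refinement
   (each a_i replaced by a factorization t_i of a_i) in which r appears
   among the new factors. *)
Definition F_irreducible (r : R) : Prop :=
  r \isn't a GRing.unit /\
  forall s : seq R, factorization r s ->
    exists t : seq (seq R),
      size t = size s /\
      (forall i, (i < size s)%N -> factorization (nth 0 s i) (nth [::] t i)) /\
      exists i, (i < size s)%N /\ r \in nth [::] t i.
End Defs.

(* If [r = a * b] with [r <> 0] and [a = r * c], then [r = r * (c * b)], so [1 - c * b] kills
   [r] and is a zero divisor; harmlessness makes [c * b] a unit, hence [b] a unit. So a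
   divisor of [r] that [r] also divides is an associate of [r], and both B-irreducibility
   and F-irreducibility (a refinement containing [r] makes some factor a multiple of [r])
   reduce to irreducibility. Conversely an irreducible [r] divides some factor of any
   factorization of itself, which yields the required refinement. *)

From HB Require Import structures.
From mathcomp Require Import all_boot all_order all_algebra.
Set Implicit Arguments. Unset Strict Implicit. Unset Printing Implicit Defensive.
Import GRing.Theory.
Local Open Scope ring_scope.

Section Irreducibility.
Variable R : comUnitRingType.
Implicit Types (a b r s : R) (t : seq R).

Lemma pideal_refl a : pideal a a.
Proof. by exists 1; rewrite mulr1. Qed.

Lemma proper_pidealP s : proper_pideal s <-> s \isn't a GRing.unit.
Proof.
split=> [[y ny] | sNU].
  by apply/negP=> sU; apply: ny; exists (s^-1 * y); rewrite mulrA divrr // mul1r.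
exists 1 => -[c ec]; move/negP: sNU; apply.
by apply/unitrP; exists c; rewrite mulrC -ec.
Qed.

Lemma pideal_prod_mem r t : r \in t -> pideal r (\prod_(a <- t) a).
Proof. by move=> rt; exists (\prod_(a <- rem r t) a); rewrite (big_rem r rt). Qed.

Lemma irreducible_B_irreducible r : r != 0 -> r \isn't a GRing.unit ->
  irreducible_elt r -> B_irreducible r.
Proof.
move=> r0 rNU irr; do 2!split=> //.
move=> s /proper_pidealP sNU sub x [c ->].
have [d rd] := sub r (pideal_refl r).
have [sU | dU] := irr _ _ rd; first by rewrite sU in sNU.
by exists (d^-1 * c); rewrite rd -mulrA mulVKr.
Qed.

(* The unit cofactor [w] is what makes the statement stable under peeling off a unit factor. *)
Lemma irreducible_prod_factor r : r \isn't a GRing.unit -> irreducible_elt r ->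
  forall t w, w \is a GRing.unit -> \prod_(a <- t) a = r * w ->
  exists2 j, (j < size t)%N & pideal r (nth 0 t j).
Proof.
move=> rNU irr; elim=> [|a t IH] w wU.
  rewrite big_nil => e; move/negP: rNU; case.
  by apply/unitrP; exists w; rewrite mulrC -e.
rewrite big_cons => e.
have er : r = a * (\prod_(x <- t) x * w^-1).
  by rewrite mulrA e -mulrA divrr // mulr1.
have [aU | cU] := irr _ _ er; last first.
  exists 0%N => //; exists (\prod_(x <- t) x * w^-1)^-1.
  by rewrite /= er -mulrA divrr // mulr1.
have wU' : w * a^-1 \is a GRing.unit by rewrite unitrM wU unitrV.
have [|j jt rj] := IH _ wU'; first by rewrite mulrA -e mulrC mulrA mulVr // mul1r.
by exists j.+1.
Qed.

Lemma irreducible_F_irreducible r : r \isn't a GRing.unit ->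
  irreducible_elt r -> F_irreducible r.
Proof.
move=> rNU irr; split=> // s [_ ps].
have ps1 : \prod_(a <- s) a = r * 1 by rewrite mulr1.
have [j js [u eu]] := irreducible_prod_factor rNU irr (unitr1 R) ps1.
exists (mkseq (fun i => if i == j then [:: r; u] else [:: nth 0 s i]) (size s)).
split; first by rewrite size_mkseq.
split; last by exists j; rewrite nth_mkseq // eqxx mem_head.
move=> i si; rewrite nth_mkseq //; case: eqP => [->|_]; split => //.
  by rewrite !big_cons big_nil mulr1 eu.
by rewrite big_cons big_nil mulr1.
Qed.

End Irreducibility.

Section HarmlessZeroDivisors.
Variable R : comUnitRingType.
Hypothesis Hharm : forall z : R, zero_divisor z -> harmless z.
Implicit Types (a b c r : R).

Lemma unit_of_mulr_fixed a b : a != 0 -> a = a * b -> b \is a GRing.unit.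
Proof.
move=> a0 e.
have zd : zero_divisor (1 - b).
  by exists a; split => //; rewrite mulrBl mul1r mulrC -e subrr.
have [_ [u [uU eu]]] := Hharm zd.
by move/addrI/oppr_inj: eu => ->.
Qed.

Lemma unit_cofactor r a b c : r != 0 -> r = a * b -> a = r * c -> b \is a GRing.unit.
Proof.
move=> r0 rab arc.
have : c * b \is a GRing.unit by apply: unit_of_mulr_fixed r0 _; rewrite mulrA -arc.
by rewrite unitrM => /andP[].
Qed.

Lemma B_irreducible_irreducible r : B_irreducible r -> irreducible_elt r.
Proof.
move=> [r0 [_ B]] a b e.
have [aU | aNU] := boolP (a \is a GRing.unit); [by left | right].
have sub x : pideal r x -> pideal a x by case=> c ->; exists (b * c); rewrite e mulrA.
have [d ad] := B a ((proper_pidealP a).2 aNU) sub a (pideal_refl a).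
exact: unit_cofactor r0 e ad.
Qed.

Lemma F_irreducible_irreducible r : r != 0 -> F_irreducible r -> irreducible_elt r.
Proof.
move=> r0 [_ F] a b e.
have fs : factorization r [:: a; b] by split=> //; rewrite !big_cons big_nil mulr1.
have [t [_ [ft [i [ilt rt]]]]] := F _ fs.
have [_ pi] := ft i ilt.
have [c ec] := pideal_prod_mem rt.
case: i ilt pi ec {rt} => [|[|//]] _ /= pi ec.
  by right; apply: unit_cofactor r0 e _; rewrite -pi ec.
by left; rewrite mulrC in e; apply: unit_cofactor r0 e _; rewrite -pi ec.
Qed.

End HarmlessZeroDivisors.

Theorem mainTheorem5 (R : comUnitRingType)
  (Hharm : forall z : R, zero_divisor z -> harmless z)
  (r : R) (hr0 : r != 0) (hru : r \isn't a GRing.unit) :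
  (irreducible_elt r <-> B_irreducible r) /\ (B_irreducible r <-> F_irreducible r).
Proof.
have irr_B := irreducible_B_irreducible hr0 hru.
have B_irr := @B_irreducible_irreducible R Hharm r.
have irr_F := irreducible_F_irreducible hru.
have F_irr := F_irreducible_irreducible Hharm hr0.
by split; split=> H; auto.
Qed.
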